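(* Fix $0\le\zeta_1<\zeta_2\le1$. For $\zeta_1<\zeta<\zeta_2$ define $$q(\zeta)=\frac{D(\zeta_2\|\zeta)\,(\zeta-\zeta_1)^2}{D(\zeta_1\|\zeta)\,(\zeta_2-\zeta)^2}.$$ Then $q$ is non-decreasing on $(\zeta_1,\zeta_2)$.
   Context: $D(p\|q)=p\log\frac pq+(1-p)\log\frac{1-p}{1-q}$ is the binary Kullback–Leibler divergence (natural log, with $0\log0=0$), defined for $p\in[0,1]$, $q\in(0,1)$. *)

From Stdlib Require Import Reals.
Open Scope R_scope.

Definition xlogxy (x y : R) : R :=
  if Req_EM_T x 0 then 0 else x * ln (x / y).

(* Binary Kullback-Leibler divergence D(p||q), natural log,
   intended for p in [0,1], q in (0,1). *)
Definition binKL (p q : R) : R :=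
  xlogxy p q + xlogxy (1 - p) (1 - q).

Definition qratio (z1 z2 z : R) : R :=
  (binKL z2 z * (z - z1) ^ 2) / (binKL z1 z * (z2 - z) ^ 2).

(* Write D(p||t) = h(p) - p ln t - (1-p) ln (1-t), so that d/dt D(p||t) = (t-p)/(t(1-t)).
   The logarithmic derivative of q at t is then
     2/(t-z1) + 2/(z2-t) - (z2-t)/(t(1-t) D(z2||t)) - (t-z1)/(t(1-t) D(z1||t)).
   It is non-negative by the lower bound D(p||t) >= 3(p-t)^2/L(p,t), with
   L(p,t) = 2(2t - t^2 + p - 2pt), because L is affine in p and satisfies
   (t-z1) L(z2,t) + (z2-t) L(z1,t) = 6 t(1-t)(z2-z1).
   The lower bound itself holds because D(p||t) - 3(p-t)^2/L(p,t) vanishes at t = p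
   and its derivative has the sign of t - p. *)

From Stdlib Require Import Reals Lra Psatz.
From Coquelicot Require Import Coquelicot.
Open Scope R_scope.

Lemma le_of_derive_sign (g dg : R -> R) (p z : R) :
  (forall t, Rmin p z <= t <= Rmax p z -> is_derive g t (dg t)) ->
  (forall t, Rmin p z <= t <= Rmax p z -> 0 <= (t - p) * dg t) ->
  g p <= g z.
Proof.
  intros Hd Hs.
  assert (MVT : forall a b, a < b -> Rmin p z = a -> Rmax p z = b ->
            exists c, g b - g a = dg c * (b - a) /\ a < c < b).
  { intros a b Hab Ha Hb. apply MVT_cor2; [exact Hab|].
    intros c Hc. apply is_derive_Reals, Hd. lra. }
  destruct (Rtotal_order p z) as [Hpz | [-> | Hzp]].
  - destruct (MVT p z Hpz) as [c [Hc Hcpz]];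
      [apply Rmin_left | apply Rmax_right |]; try lra.
    assert (0 <= dg c).
    { assert (Hsc := Hs c). rewrite Rmin_left, Rmax_right in Hsc by lra.
      specialize (Hsc ltac:(lra)). nra. }
    nra.
  - lra.
  - destruct (MVT z p Hzp) as [c [Hc Hczp]];
      [apply Rmin_right | apply Rmax_left |]; try lra.
    assert (dg c <= 0).
    { assert (Hsc := Hs c). rewrite Rmin_right, Rmax_left in Hsc by lra.
      specialize (Hsc ltac:(lra)). nra. }
    nra.
Qed.

Lemma ln_one_minus_lower (z : R) : 0 <= z < 1 -> 3 * z / (2 * (2 - z)) <= - ln (1 - z).
Proof.
  intros Hz.
  set (g := fun t => - ln (1 - t) - 3 * t / (2 * (2 - t))).
  set (dg := fun t => (1 - t + t ^ 2) / ((1 - t) * (2 - t) ^ 2)).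
  assert (Hg : g 0 <= g z).
  { apply (le_of_derive_sign g dg); rewrite Rmin_left, Rmax_right by lra; intros t Ht.
    - unfold g, dg. auto_derive; [lra | field; lra].
    - unfold dg. apply Rmult_le_pos; [lra|].
      apply Rdiv_le_0_compat; [nra | apply Rmult_lt_0_compat; nra]. }
  unfold g in Hg. rewrite Rminus_0_r, ln_1 in Hg. lra.
Qed.

Definition neg_entropy (p : R) : R := xlogxy p 1 + xlogxy (1 - p) 1.

(* Agrees with [binKL p] on (0,1) and is differentiable there in its second argument. *)
Definition binKL_ext (p z : R) : R := neg_entropy p - p * ln z - (1 - p) * ln (1 - z).

Lemma xlogxy_split (p z : R) : 0 <= p -> 0 < z -> xlogxy p z = xlogxy p 1 - p * ln z.
Proof.
  intros Hp Hz. unfold xlogxy. destruct (Req_EM_T p 0) as [->|Hn]; [ring|].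
  rewrite !ln_div by lra. rewrite ln_1. ring.
Qed.

Lemma binKL_extE (p z : R) : 0 <= p <= 1 -> 0 < z < 1 -> binKL p z = binKL_ext p z.
Proof.
  intros Hp Hz. unfold binKL, binKL_ext, neg_entropy.
  rewrite (xlogxy_split p z), (xlogxy_split (1 - p) (1 - z)) by lra. ring.
Qed.

Lemma neg_entropy_0 : neg_entropy 0 = 0.
Proof.
  unfold neg_entropy, xlogxy.
  destruct (Req_EM_T 0 0); [|lra]. destruct (Req_EM_T (1 - 0) 0); [lra|].
  rewrite Rminus_0_r, Rdiv_1_r, ln_1. ring.
Qed.

Lemma neg_entropy_1m (p : R) : neg_entropy (1 - p) = neg_entropy p.
Proof. unfold neg_entropy. replace (1 - (1 - p)) with p by ring. ring. Qed.

Lemma binKL_ext_1m (p z : R) : binKL_ext (1 - p) (1 - z) = binKL_ext p z.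
Proof.
  unfold binKL_ext. rewrite neg_entropy_1m.
  replace (1 - (1 - p)) with p by ring. replace (1 - (1 - z)) with z by ring. ring.
Qed.

Lemma binKL_ext_diag (p : R) : 0 < p < 1 -> binKL_ext p p = 0.
Proof.
  intros Hp. unfold binKL_ext, neg_entropy, xlogxy.
  destruct (Req_EM_T p 0); [lra|]. destruct (Req_EM_T (1 - p) 0); [lra|].
  rewrite !Rdiv_1_r. ring.
Qed.

Lemma is_derive_binKL_ext (p z : R) :
  0 < z < 1 -> is_derive (binKL_ext p) z ((z - p) / (z * (1 - z))).
Proof. intros Hz. unfold binKL_ext. auto_derive; [lra | field; lra]. Qed.

Definition kl_denom (p z : R) : R := 2 * (2 * z - z ^ 2 + p - 2 * p * z).

Lemma kl_denom_pos (p z : R) : 0 <= p <= 1 -> 0 < z < 1 -> 0 < kl_denom p z.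
Proof.
  intros Hp Hz. unfold kl_denom.
  replace (2 * z - z ^ 2 + p - 2 * p * z)
    with ((1 - p) * (z * (2 - z)) + p * ((1 - z) * (1 + z))) by ring.
  assert (0 < z * (2 - z)) by nra. assert (0 < (1 - z) * (1 + z)) by nra. nra.
Qed.

Lemma kl_denom_1m (p z : R) : kl_denom (1 - p) (1 - z) = kl_denom p z.
Proof. unfold kl_denom. ring. Qed.

Lemma kl_denom_interpolate (a b t : R) :
  (t - a) * kl_denom b t + (b - t) * kl_denom a t = 6 * (t * (1 - t)) * (b - a).
Proof. unfold kl_denom. ring. Qed.

Lemma binKL_ext_lower_interior (p z : R) :
  0 < p < 1 -> 0 < z < 1 -> 3 * (p - z) ^ 2 <= binKL_ext p z * kl_denom p z.
Proof.
  intros Hp Hz.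
  set (g := fun t => binKL_ext p t - 3 * (p - t) ^ 2 / kl_denom p t).
  set (dg := fun t =>
    (t - p) * (4 * (p - t) ^ 2 * (1 - t + t ^ 2)) / (t * (1 - t) * kl_denom p t ^ 2)).
  assert (Hg : g p <= g z).
  assert (Hmin : 0 < Rmin p z) by (apply Rmin_glb_lt; lra).
  assert (Hmax : Rmax p z < 1) by (apply Rmax_lub_lt; lra).
  { apply (le_of_derive_sign g dg); intros t Ht;
      assert (Ht01 : 0 < t < 1) by lra;
      assert (HL := kl_denom_pos p t ltac:(lra) Ht01).
    - unfold g, dg, binKL_ext. unfold kl_denom in *. auto_derive; [lra | field; lra].
    - unfold dg. replace ((t - p) * _) with
        ((t - p) ^ 2 * (4 * (p - t) ^ 2) * ((1 - t + t ^ 2) / (t * (1 - t) * kl_denom p t ^ 2)))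
        by (field; nra).
      apply Rmult_le_pos; [apply Rmult_le_pos; [apply pow2_ge_0 | apply Rmult_le_pos; [lra | apply pow2_ge_0]] |].
      apply Rdiv_le_0_compat; [nra | apply Rmult_lt_0_compat; nra]. }
  assert (HL := kl_denom_pos p z ltac:(lra) Hz).
  unfold g in Hg; cbv beta in Hg.
  rewrite binKL_ext_diag, Rminus_diag in Hg by lra.
  replace (0 - 3 * 0 ^ 2 / kl_denom p p) with 0 in Hg by (unfold Rdiv; ring).
  apply (Rmult_le_compat_r (kl_denom p z)) in Hg; [|lra].
  replace ((binKL_ext p z - 3 * (p - z) ^ 2 / kl_denom p z) * kl_denom p z)
    with (binKL_ext p z * kl_denom p z - 3 * (p - z) ^ 2) in Hg by (field; lra).
  lra.
Qed.

Lemma binKL_ext_lower_0 (z : R) : 0 < z < 1 -> 3 * (0 - z) ^ 2 <= binKL_ext 0 z * kl_denom 0 z.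
Proof.
  intros Hz. assert (Hln := ln_one_minus_lower z ltac:(lra)).
  unfold binKL_ext, kl_denom. rewrite neg_entropy_0.
  assert (0 < 2 * (2 * z - z ^ 2 + 0 - 2 * 0 * z)) by nra.
  replace (3 * (0 - z) ^ 2)
    with (3 * z / (2 * (2 - z)) * (2 * (2 * z - z ^ 2 + 0 - 2 * 0 * z))) by (field; lra).
  apply Rmult_le_compat_r; lra.
Qed.

Lemma binKL_ext_lower (p z : R) :
  0 <= p <= 1 -> 0 < z < 1 -> 3 * (p - z) ^ 2 <= binKL_ext p z * kl_denom p z.
Proof.
  intros Hp Hz. destruct (Req_dec p 0) as [->|H0]; [now apply binKL_ext_lower_0|].
  destruct (Req_dec p 1) as [->|H1]; [|apply binKL_ext_lower_interior; lra].
  rewrite <- (binKL_ext_1m 1 z), <- (kl_denom_1m 1 z), Rminus_diag.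
  replace (3 * (1 - z) ^ 2) with (3 * (0 - (1 - z)) ^ 2) by ring.
  apply binKL_ext_lower_0. lra.
Qed.

Lemma binKL_ext_pos (p z : R) : 0 <= p <= 1 -> 0 < z < 1 -> p <> z -> 0 < binKL_ext p z.
Proof.
  intros Hp Hz Hpz. assert (Hb := binKL_ext_lower p z Hp Hz).
  assert (HL := kl_denom_pos p z Hp Hz). assert (0 < (p - z) ^ 2) by (apply pow2_gt_0; lra).
  nra.
Qed.

Definition qratio_ext (a b t : R) : R :=
  (binKL_ext b t * (t - a) ^ 2) / (binKL_ext a t * (b - t) ^ 2).

Definition qratio_log_derive (a b t : R) : R :=
  2 / (t - a) + 2 / (b - t)
  - (b - t) / (t * (1 - t) * binKL_ext b t) - (t - a) / (t * (1 - t) * binKL_ext a t).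

Section QratioDerivative.

Variables a b t : R.
Hypotheses (Ha : 0 <= a) (Hat : a < t) (Htb : t < b) (Hb : b <= 1).

Let Da_pos : 0 < binKL_ext a t.
Proof. apply binKL_ext_pos; lra. Qed.

Let Db_pos : 0 < binKL_ext b t.
Proof. apply binKL_ext_pos; lra. Qed.

Lemma is_derive_qratio_ext :
  is_derive (qratio_ext a b) t (qratio_ext a b t * qratio_log_derive a b t).
Proof.
  assert (0 < t * (1 - t)) by nra.
  unfold qratio_ext, qratio_log_derive. unfold binKL_ext in *. auto_derive.
  - repeat split; try lra. unfold Rminus in Da_pos.
    apply Rmult_integral_contrapositive; split; apply Rgt_not_eq; nra.
  - replace (1 + - t) with (1 - t) by ring. field. repeat split; nra.
Qed.

Lemma qratio_log_derive_nonneg : 0 <= qratio_log_derive a b t.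
Proof.
  assert (Ht : 0 < t < 1) by lra. set (h := t * (1 - t)). assert (0 < h) by (unfold h; nra).
  assert (Bound : forall s D L, 0 < s -> 0 < D -> 3 * s ^ 2 <= D * L ->
                    s / (h * D) <= L / (3 * h * s)).
  { intros s D L Hs HD HDL.
    replace (s / (h * D)) with (L / (3 * h * s) - (D * L - 3 * s ^ 2) / (3 * h * s * D))
      by (field; lra).
    assert (0 <= (D * L - 3 * s ^ 2) / (3 * h * s * D)).
    { apply Rdiv_le_0_compat; [lra | apply Rmult_lt_0_compat; nra]. }
    lra. }
  assert (Bb : (b - t) / (h * binKL_ext b t) <= kl_denom b t / (3 * h * (b - t))).
  { apply Bound; [lra | exact Db_pos | apply binKL_ext_lower; lra]. }
  assert (Ba : (t - a) / (h * binKL_ext a t) <= kl_denom a t / (3 * h * (t - a))).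
  { apply Bound; [lra | exact Da_pos |].
    replace ((t - a) ^ 2) with ((a - t) ^ 2) by ring. apply binKL_ext_lower; lra. }
  assert (Sum : kl_denom b t / (3 * h * (b - t)) + kl_denom a t / (3 * h * (t - a))
                = 2 / (t - a) + 2 / (b - t)).
  { replace (kl_denom b t / (3 * h * (b - t)) + kl_denom a t / (3 * h * (t - a)))
      with (((t - a) * kl_denom b t + (b - t) * kl_denom a t) / (3 * h * (b - t) * (t - a)))
      by (field; lra).
    rewrite kl_denom_interpolate. fold h. field. lra. }
  unfold qratio_log_derive. fold h. lra.
Qed.

End QratioDerivative.

Lemma qratio_ext_nonneg (a b t : R) :
  0 <= a -> a < t -> t < b -> b <= 1 -> 0 <= qratio_ext a b t.
Proof.
  intros. unfold qratio_ext. apply Rdiv_le_0_compat.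
  - apply Rmult_le_pos; [apply Rlt_le, binKL_ext_pos; lra | apply pow2_ge_0].
  - apply Rmult_lt_0_compat; [apply binKL_ext_pos; lra | apply pow2_gt_0; lra].
Qed.

Theorem lemma16 (z1 z2 : R) :
  0 <= z1 -> z1 < z2 -> z2 <= 1 ->
  forall x y : R, z1 < x -> x <= y -> y < z2 ->
    qratio z1 z2 x <= qratio z1 z2 y.
Proof.
  intros H1 H12 H2 x y Hx Hxy Hy.
  assert (Eq : forall t, z1 < t < z2 -> qratio z1 z2 t = qratio_ext z1 z2 t).
  { intros t Ht. unfold qratio, qratio_ext. rewrite !binKL_extE by lra. reflexivity. }
  rewrite !Eq by lra.
  apply (le_of_derive_sign _ (fun t => qratio_ext z1 z2 t * qratio_log_derive z1 z2 t));
    rewrite Rmin_left, Rmax_right by lra; intros t Ht.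
  - apply is_derive_qratio_ext; lra.
  - apply Rmult_le_pos; [lra | apply Rmult_le_pos].
    + apply qratio_ext_nonneg; lra.
    + apply qratio_log_derive_nonneg; lra.
Qed.
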